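(* Let $d$ be a prime number and $p$ an odd prime, and let $T_d$ be the $d$-th Chebyshev polynomial of the first kind, viewed as a self-map of $\mathbb{A}^1(\mathbb{F}_p)=\mathbb{F}_p$. If $d=2$, or if $2d=p+1$, then $T_d$ has exactly $\frac{p-1}{2}$ leaves, i.e. exactly $\frac{p-1}{2}$ points $x\in\mathbb{F}_p$ have no preimage under $T_d$.
   Context: The $d$-th Chebyshev polynomial of the first kind $T_d\in\mathbb{Z}[z]$ is the monic degree-$d$ polynomial with $T_d(z+z^{-1})=z^d+z^{-d}$, reduced modulo $p$. A leaf of the functional graph of $T_d$ is a point with no preimage in $\mathbb{F}_p$. *)

From mathcomp Require Import all_boot all_order all_algebra.
From mathcomp Require Import ring.
Set Implicit Arguments. Unset Strict Implicit. Unset Printing Implicit Defensive.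
Import GRing.Theory.
Local Open Scope ring_scope.

(* Chebyshev polynomials of the first kind in the monic normalisation
   T_d(z + z^-1) = z^d + z^-d, over Z: T_0 = 2, T_1 = X,
   T_{n+2} = X T_{n+1} - T_n. *)
Fixpoint cheb_pair (n : nat) : {poly int} * {poly int} :=
  match n with
  | 0%N => (2%:P, 'X)
  | n'.+1 => let: (a, b) := cheb_pair n' in (b, 'X * b - a)
  end.

Definition cheb (d : nat) : {poly int} := (cheb_pair d).1.

Definition cheb_mod (p d : nat) : {poly 'F_p} := map_poly intr (cheb d).

Definition leaves (p d : nat) : {set 'F_p} :=
  [set x : 'F_p | [forall y : 'F_p, (cheb_mod p d).[y] != x]].

Lemma cheb_pairE (F : fieldType) (z : F) (n : nat) : z != 0 ->
  (map_poly intr (cheb_pair n).1).[z + z^-1] = z ^+ n + z^-1 ^+ n /\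
  (map_poly intr (cheb_pair n).2).[z + z^-1] = z ^+ n.+1 + z^-1 ^+ n.+1.
Proof.
move=> z0; elim: n => [|n [IH1 IH2]] /=.
  rewrite map_polyC map_polyX !hornerE /= expr0 expr1 expr1.
  by split=> //; rewrite -[2%:~R]/(1 + 1 : F).
case: (cheb_pair n) IH1 IH2 => a b /= IH1 IH2; split=> //.
rewrite rmorphB rmorphM /= map_polyX !hornerE IH1 IH2.
rewrite !exprS; have zz : z * z^-1 = 1 by rewrite mulfV.
have e : (z + z^-1) * (z * z ^+ n + z^-1 * z^-1 ^+ n) - (z ^+ n + z^-1 ^+ n)
  = z * (z * z ^+ n) + z^-1 * (z^-1 * z^-1 ^+ n) + (z * z^-1 - 1) * (z^+n + z^-1^+n).
  by ring.
by rewrite e zz subrr mul0r addr0.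
Qed.

From mathcomp Require Import all_boot all_order all_algebra all_field ring zify.
Import GRing.Theory.
Set Implicit Arguments. Unset Strict Implicit. Unset Printing Implicit Defensive.
Local Open Scope ring_scope.

(* Everything follows from counting images of two-to-one maps.  The maps
   x |-> x^2 and u |-> u + u^-1 are two-to-one on F_p and F_p^* away from their
   fixed points (0, resp. +-1), so S2 = {x^2 - 2} and S = {u + u^-1 | u != 0}
   both have (p + 1)/2 elements.  For d = 2, S2 is the image of T_2 = X^2 - 2.
   For 2d = p + 1 with d odd, set m = (p - 1)/2 = d - 1.  Then
   T_d(u + u^-1) = u^d + u^-d = u^m (u + u^-1) with u^m = +-1 and (-u)^m = u^m,
   so T_d maps S onto S.  If y is not in S, then c = (y/2)^2 - 1 is a non-square
   and y = z + z^-1 with z = y/2 + sqrt c in F_p[X]/(X^2 - c); by Euler's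
   criterion the Frobenius maps z to y/2 - sqrt c = z^-1, hence z^(p+1) = 1 and
   T_d(y)^2 = z^(2d) + z^(-2d) + 2 = 4, i.e. T_d(y) = +-2, which lies in S.
   In both cases T_d misses exactly p - (p + 1)/2 = (p - 1)/2 points. *)

Lemma double_card_imset_involution (T U : finType) (A : {pred T}) (f : T -> U)
    (s : T -> T) :
  {in A, forall x, s x \in A} -> {in A, forall x, s (s x) = x} ->
  {in A &, forall x y, (f x == f y) = (y == x) || (y == s x)} ->
  (#|f @: A| * 2 = #|A| + #|[set x in A | s x == x]|)%N.
Proof.
move=> sA sK fE.
have fiberE a : a \in A -> [pred x in A | f x == f a] =i [set a; s a].
  move=> aA x; rewrite !inE /=; case xA: (x \in A); first by rewrite eq_sym fE.
  by apply/esym/norP; split; apply: contraFneq xA => ->; rewrite ?sA.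
have -> : (#|A| + #|[set x in A | s x == x]| = \sum_(x in A) (1 + (s x == x)))%N.
  rewrite big_split /= sum1_card; congr (_ + _)%N.
  rewrite -sum1_card big_mkcond [RHS]big_mkcond /=.
  by apply: eq_bigr => x _; rewrite inE; case: (x \in A).
rewrite -sum_nat_const (partition_big f (mem (f @: A))) /=; last first.
  by move=> x xA; apply: imset_f.
apply: eq_bigr => _ /imsetP [a aA ->]; rewrite (eq_bigl _ _ (fiberE a aA)).
have [saa | nsaa] := eqVneq (s a) a; first by rewrite saa setUid big_set1 saa eqxx.
by rewrite big_setU1 ?inE 1?eq_sym //= big_set1 sK // eq_sym (negbTE nsaa).
Qed.

Lemma expf_card_pred (F : finFieldType) (x : F) : x != 0 -> x ^+ #|F|.-1 = 1.
Proof.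
move=> x0; apply: (mulfI x0); rewrite mulr1 -exprS prednK ?expf_card //.
exact: (ltn_trans _ (finNzRing_gt1 F)).
Qed.

Lemma eqf_add_inv (F : fieldType) (x y : F) : x != 0 -> y != 0 ->
  (x + x^-1 == y + y^-1) = (y == x) || (y == x^-1).
Proof.
move=> x0 y0; rewrite -subr_eq0.
have -> : x + x^-1 - (y + y^-1) = (x - y) * (x * y - 1) / (x * y).
  by field; rewrite x0 y0.
rewrite !mulf_eq0 invr_eq0 mulf_eq0 (negbTE x0) (negbTE y0) !orbF !subr_eq0 eq_sym.
by rewrite -[y == x^-1](inj_eq (mulfI x0)) mulfV.
Qed.

Definition inv_sums (F : finFieldType) : {set F} := [set x + x^-1 | x in [set~ 0]].

Lemma inv_sumsN (F : finFieldType) (y : F) : y \in inv_sums F -> - y \in inv_sums F.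
Proof.
case/imsetP=> u; rewrite in_setC1 => u0 ->.
by rewrite opprD -invrN; apply: imset_f; rewrite in_setC1 oppr_eq0.
Qed.

Lemma two_in_inv_sums (F : finFieldType) : 2 \in inv_sums F.
Proof. by apply/imsetP; exists 1; rewrite ?invr1 // in_setC1 oner_eq0. Qed.

Section OddCharacteristic.

Variable F : finFieldType.
Hypothesis two_neq0 : (2 : F) != 0.

Lemma oppr_eq_self (x : F) : (- x == x) = (x == 0).
Proof.
rewrite eq_sym -subr_eq0 opprK -mulr2n -mulr_natr mulf_eq0.
by rewrite (negbTE two_neq0) orbF.
Qed.

Lemma double_card_sqr (A : {pred F}) : {in A, forall x, - x \in A} ->
  (#|[set (x * x)%R | x in A]| * 2 = #|A| + (0%R \in A))%N.
Proof.
move=> NA; rewrite (double_card_imset_involution (s := -%R)) //; last first.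
- by move=> x y _ _; rewrite -!expr2 eq_sym eqf_sqr.
- by move=> x _; rewrite opprK.
congr (_ + _)%N; case: (boolP (0 \in A)) => A0.
  rewrite (_ : [set x in A | _] = [set 0]) ?cards1 //.
  by apply/setP => x; rewrite !inE oppr_eq_self andbC; case: eqP => // ->.
rewrite (_ : [set x in A | _] = set0) ?cards0 //.
by apply/setP => x; rewrite !inE oppr_eq_self andbC; case: eqP => // ->; apply/negbTE.
Qed.

Lemma euler_criterion_nonsqr (c : F) :
  (forall t, t * t != c) -> c ^+ #|F|.-1./2 = -1.
Proof.
move=> c_nonsqr; pose Q := [set x * x | x in [set~ (0 : F)]].
have cardQ : (#|Q| * 2)%N = #|F|.-1.
  rewrite double_card_sqr ?cardsC1 ?inE ?eqxx ?addn0 // => x.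
  by rewrite !inE oppr_eq0.
have c0 : c != 0 by apply: contraNneq (c_nonsqr 0) => ->; rewrite mul0r.
have cQ : c \notin Q by apply/imsetP => -[t _ ct]; case/eqP: (c_nonsqr t).
rewrite -cardQ muln2 doubleK.
have /eqP := expf_card_pred c0; rewrite -cardQ exprM sqrf_eq1.
case/orP=> /eqP // cQ1; exfalso.
have Q_gt0 : (0 < #|Q|)%N.
  by apply/card_gt0P; exists 1; apply/imsetP; exists 1; rewrite ?mulr1 // !inE oner_eq0.
have XQ_neq0 : 'X^#|Q| - 1 != 0 :> {poly F}.
  by rewrite -size_poly_eq0 -polyC1 size_XnsubC.
suff /(max_poly_roots XQ_neq0) : all (root ('X^#|Q| - 1)) (enum (c |: Q)).
  by rewrite enum_uniq -polyC1 size_XnsubC // -cardE cardsU1 cQ ltnn => /(_ isT).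
apply/allP => x; rewrite mem_enum in_setU1 => /orP [/eqP -> | /imsetP [t]].
  by rewrite /root !hornerE cQ1 subrr.
rewrite in_setC1 => t0 ->; rewrite /root !hornerE -expr2 -exprM mulnC cardQ.
by rewrite expf_card_pred // subrr.
Qed.

Lemma double_card_inv_sums : (#|inv_sums F| * 2 = #|F|.+1)%N.
Proof.
rewrite (double_card_imset_involution (s := GRing.inv)); first last.
- by move=> x y; rewrite !in_setC1; apply: eqf_add_inv.
- by move=> x _; rewrite invrK.
- by move=> x; rewrite !in_setC1 invr_eq0.
have -> : [set x in [set~ 0] | x^-1 == x] = [set 1; -1 : F].
  apply/setP => x; rewrite !inE; have [-> | x0] /= := eqVneq x 0.
    by rewrite eq_sym oner_eq0 eq_sym oppr_eq0 oner_eq0.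
  by rewrite -(inj_eq (mulfI x0)) mulfV // -expr2 eq_sym sqrf_eq1.
rewrite cards2 cardsC1 eq_sym oppr_eq_self oner_eq0 addn2.
by rewrite prednK // (ltn_trans _ (finNzRing_gt1 F)).
Qed.

Lemma inv_sums_of_sqr (y t : F) : t * t = (y / 2) ^+ 2 - 1 -> y \in inv_sums F.
Proof.
move=> tE; have uv1 : (y / 2 + t) * (y / 2 - t) = 1.
  by rewrite mulrC -subr_sqr [t ^+ 2]expr2 tE subKr.
have u0 : y / 2 + t != 0.
  by apply: contra_eq_neq uv1 => ->; rewrite mul0r eq_sym oner_eq0.
apply/imsetP; exists (y / 2 + t); rewrite ?in_setC1 //.
have -> : (y / 2 + t)^-1 = y / 2 - t by apply: (mulfI u0); rewrite mulfV // uv1.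
by field.
Qed.

End OddCharacteristic.

Lemma horner_cheb (R : comNzRingType) (z w : R) n : z * w = 1 ->
  (map_poly intr (cheb n)).[z + w] = z ^+ n + w ^+ n.
Proof.
move=> zw1.
suff /(_ n)[] : forall k, (map_poly intr (cheb_pair k).1).[z + w] = z ^+ k + w ^+ k /\
    (map_poly intr (cheb_pair k).2).[z + w] = z ^+ k.+1 + w ^+ k.+1 by [].
elim=> [|k]; first by rewrite /= map_polyC map_polyX !hornerE /= expr0; split; ring.
rewrite /=; case: (cheb_pair k) => a b /= [IHa IHb]; split=> //.
rewrite rmorphB rmorphM /= map_polyX !hornerE IHa IHb !exprS.
ring: zw1.
Qed.

Lemma rmorph_horner_map_intr (R S : nzRingType) (f : {rmorphism R -> S})
    (q : {poly int}) x :
  f (map_poly intr q).[x] = (map_poly intr q).[f x].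
Proof.
rewrite -horner_map -map_poly_comp; congr (_.[_]).
by apply: eq_map_poly => k /=; rewrite rmorph_int.
Qed.

Lemma horner_cheb2 (R : nzRingType) (x : R) : (map_poly intr (cheb 2)).[x] = x * x - 2.
Proof.
by rewrite /cheb /= rmorphB rmorphM /= map_polyX map_polyC hornerD hornerN hornerMX
  hornerX hornerC pmulrn.
Qed.

Lemma double_card_cheb2_image (F : finFieldType) : (2 : F) != 0 ->
  (#|[set (map_poly intr (cheb 2)).[y] | y : F]| * 2 = #|F|.+1)%N.
Proof.
move=> two_neq0.
have -> : [set (map_poly intr (cheb 2)).[y] | y : F] =
          [set x - 2 | x in [set y * y | y : F]].
  by rewrite -imset_comp; apply: eq_imset => y; apply: horner_cheb2.
by rewrite card_imset ?double_card_sqr ?addn1 //; apply: addIr.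
Qed.

Lemma Fp_two_neq0 p : prime p -> odd p -> (2 : 'F_p) != 0.
Proof. by move=> p_pr p_odd; rewrite -unitfE unitFpE // coprimen2. Qed.

Section NonsplitQuadraticExtension.

Variables (p : nat) (c : 'F_p).
Hypotheses (p_pr : prime p) (p_odd : odd p) (c_nonsqr : forall t, t * t != c).

Local Notation h := ('X^2 - c%:P).
Local Notation sqrtc := (qpolyX h).

Lemma sqrtc_sqr : sqrtc ^+ 2 = qpolyC h c.
Proof.
have h_monic : mk_monic h = h by rewrite /mk_monic size_XnsubC // monicXnsubC.
rewrite -rmorphXn /= -[X in in_qpoly h X](subrK c%:P) rmorphD /=.
have -> : in_qpoly h h = 0.
  by apply: val_inj; rewrite /= h_monic Pdiv.RingMonic.rmodpp // monicXnsubC.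
rewrite add0r; apply: val_inj => /=; rewrite h_monic Pdiv.Ring.rmodp_small //.
by rewrite size_XnsubC // (leq_ltn_trans (size_polyC_leq1 _)).
Qed.

Lemma sqrtc_frobenius : sqrtc ^+ p = - sqrtc.
Proof.
have p_eq : (p.-1./2 * 2).+1 = p by have := prime_gt0 p_pr; lia.
rewrite -[X in sqrtc ^+ X]p_eq (exprS sqrtc) mulnC exprM sqrtc_sqr -rmorphXn /=.
have := euler_criterion_nonsqr (Fp_two_neq0 p_pr p_odd) c_nonsqr.
by rewrite card_Fp // => ->; rewrite rmorphN1 mulrN1.
Qed.

Lemma qpolyC_frobenius (a : 'F_p) : qpolyC h a ^+ p = qpolyC h a.
Proof. by rewrite -rmorphXn /=; have := expf_card a; rewrite card_Fp // => ->. Qed.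

Lemma frobenius_conj (a : 'F_p) : (qpolyC h a + sqrtc) ^+ p = qpolyC h a - sqrtc.
Proof.
have pchar_p : p \in [pchar {poly %/ h}] by rewrite pchar_qpoly pchar_Fp.
rewrite -(pFrobenius_autE pchar_p) rmorphD /= !pFrobenius_autE.
by rewrite qpolyC_frobenius sqrtc_frobenius.
Qed.

Lemma sqr_horner_cheb_nonsplit n (a : 'F_p) :
  (2 * n = p + 1)%N -> a ^+ 2 - c = 1 -> (cheb_mod p n).[a *+ 2] ^+ 2 = 4.
Proof.
move=> nE ac1; pose z := qpolyC h a + sqrtc; pose w := qpolyC h a - sqrtc.
have zw1 : z * w = 1.
  by rewrite mulrC -subr_sqr sqrtc_sqr -rmorphXn -rmorphB ac1 rmorph1.
have z_add_w : z + w = qpolyC h (a *+ 2).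
  by rewrite addrACA subrr addr0 -rmorphD mulr2n.
have z2n : z ^+ (2 * n) = 1 by rewrite nE addn1 (exprSr z) frobenius_conj mulrC.
have w2n : w ^+ (2 * n) = 1.
  by have := exprMn (2 * n)%N z w; rewrite zw1 expr1n z2n mul1r.
have : (map_poly intr (cheb n)).[z + w] ^+ 2 = 4.
  rewrite horner_cheb //.
  have -> : (z ^+ n + w ^+ n) ^+ 2 = z ^+ (2 * n) + w ^+ (2 * n) + 2 * (z * w) ^+ n.
    by rewrite mulnC !exprM exprMn; ring.
  by rewrite z2n w2n zw1 expr1n; ring.
rewrite z_add_w -(rmorph_nat (qpolyC h)) -(rmorph_horner_map_intr (qpolyC h)).
by rewrite -rmorphXn; apply: fmorph_inj.
Qed.

End NonsplitQuadraticExtension.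

Section OddDegree.

Variables p d : nat.
Hypotheses (p_pr : prime p) (p_odd : odd p) (d_odd : odd d) (dE : (2 * d = p + 1)%N).

Local Notation m := p.-1./2.

Lemma expr_half_pred (u : 'F_p) : u != 0 -> u ^+ m = 1 \/ u ^+ m = -1.
Proof.
move=> u0; suff /eqP : (u ^+ m) ^+ 2 = 1 by rewrite sqrf_eq1 => /orP[] /eqP; [left | right].
by have := expf_card_pred u0; rewrite card_Fp // -exprM => <-; congr (_ ^+ _); lia.
Qed.

Lemma exprN_half_pred (u : 'F_p) : (- u) ^+ m = u ^+ m.
Proof. by rewrite exprNn -signr_odd (_ : odd m = false) ?mul1r //; lia. Qed.

Lemma horner_cheb_inv_sum (u : 'F_p) : u != 0 ->
  (cheb_mod p d).[u + u^-1] = u ^+ m * (u + u^-1).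
Proof.
move=> u0; rewrite /cheb_mod horner_cheb ?mulfV // (_ : d = m.+1); last by lia.
have eV : (u ^+ m)^-1 = u ^+ m by case: (expr_half_pred u0) => ->; rewrite ?invr1 ?invrN1.
by rewrite exprVn exprS invfM eV; ring.
Qed.

Lemma horner_cheb_in_inv_sums (y : 'F_p) : (cheb_mod p d).[y] \in inv_sums 'F_p.
Proof.
have two_neq0 := Fp_two_neq0 p_pr p_odd.
have [/imsetP [u] | y_notin] := boolP (y \in inv_sums 'F_p).
  rewrite in_setC1 => u0 ->; rewrite horner_cheb_inv_sum //.
  have u_in : u + u^-1 \in inv_sums 'F_p by apply: imset_f; rewrite in_setC1.
  by case: (expr_half_pred u0) => ->; [rewrite mul1r | rewrite mulN1r inv_sumsN].
have nonsqr t : t * t != (y / 2) ^+ 2 - 1.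
  by apply: contraNneq y_notin; apply: inv_sums_of_sqr.
have y_half : (y / 2) *+ 2 = y by rewrite mulr2n; field.
have := sqr_horner_cheb_nonsplit p_pr p_odd nonsqr dE (subKr _ _).
rewrite y_half (_ : 4 = 2 ^+ 2) => [/eqP | ]; last by rewrite expr2 -natrM.
by rewrite eqf_sqr => /orP[] /eqP ->; [|apply: inv_sumsN]; apply: two_in_inv_sums.
Qed.

Lemma cheb_image_odd : [set (cheb_mod p d).[y] | y : 'F_p] = inv_sums 'F_p.
Proof.
apply/eqP; rewrite eqEsubset; apply/andP; split.
  by apply/subsetP => x /imsetP [y _ ->]; apply: horner_cheb_in_inv_sums.
apply/subsetP => x /imsetP [u]; rewrite in_setC1 => u0 ->.
have [e | e] := expr_half_pred u0; [apply/imsetP; exists (u + u^-1) => //|].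
  by rewrite horner_cheb_inv_sum // e mul1r.
apply/imsetP; exists (- u + (- u)^-1) => //.
by rewrite horner_cheb_inv_sum ?oppr_eq0 // exprN_half_pred e mulN1r invrN -opprD opprK.
Qed.

End OddDegree.

Lemma leavesE p d : leaves p d = ~: [set (cheb_mod p d).[y] | y : 'F_p].
Proof.
apply/setP => x; rewrite inE in_setC.
apply/forallP/negP => [nohit /imsetP [y _ xE] | nohit y].
  by case/eqP: (nohit y); rewrite xE.
by apply/eqP => xE; apply: nohit; apply/imsetP; exists y.
Qed.

Local Close Scope ring_scope.

Theorem mainTheorem7 (d p : nat) :
  prime d -> prime p -> odd p ->
  (d = 2 \/ 2 * d = p + 1) ->
  #|leaves p d| = (p - 1)./2.
Proof.
move=> d_pr p_pr p_odd d_cases.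
have card_image : #|[set (cheb_mod p d).[y]%R | y : 'F_p]| * 2 = p.+1.
  have two_neq0 := Fp_two_neq0 p_pr p_odd.
  have [d2 | d_odd] := even_prime d_pr.
    by rewrite d2; have := double_card_cheb2_image two_neq0; rewrite card_Fp.
  have dE : 2 * d = p + 1 by case: d_cases => // d2; rewrite d2 in d_odd.
  by rewrite cheb_image_odd // double_card_inv_sums // card_Fp.
rewrite leavesE cardsCs setCK card_Fp //.
(* [set] identifies the two cardinals, whose finType instances differ only up to conversion. *)
by move: card_image; set image_card := #|_|; lia.
Qed.
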